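(* Let $B$ be an $n\times N$ complex matrix with columns $x_1,\dots,x_N\in\mathbb{C}^n$ and rows $w_1,\dots,w_n\in\mathbb{C}^N$. Then $\binom{n+1}{2}\sum_{i,j}|\langle x_i|x_j\rangle|^{4} = \big(\sum_i\langle x_i|x_i\rangle^2\big)^2$ if and only if the vectors of the family $$\{w_i^{(2)} : 1\le i\le n\}\cup\{\sqrt2\, w_i\circ w_j : 1\le i<j\le n\}$$ all have the same length and are pairwise orthogonal.
   Context: For vectors of equal size, the Schur product $a\circ b$ is the entrywise product and $a^{(2)}=a\circ a$. $\langle x|y\rangle=\sum_t\overline{x_t}y_t$. *)

From HB Require Import structures.
From mathcomp Require Import all_boot all_order all_algebra all_field.
Set Implicit Arguments. Unset Strict Implicit. Unset Printing Implicit Defensive.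
Import Order.TTheory GRing.Theory Num.Theory.
Local Open Scope ring_scope.

Definition ip (m : nat) (x y : 'rV[algC]_m) : algC :=
  \sum_(t < m) (x 0 t)^* * y 0 t.

Definition schur (m : nat) (x y : 'rV[algC]_m) : 'rV[algC]_m :=
  \row_(t < m) (x 0 t * y 0 t).

Definition colv (n N : nat) (B : 'M[algC]_(n, N)) (i : 'I_N) : 'rV[algC]_n :=
  (col i B)^T.

Definition rowv (n N : nat) (B : 'M[algC]_(n, N)) (i : 'I_n) : 'rV[algC]_N :=
  row i B.

(* The family member indexed by (i,j) with i <= j:
   w_i^(2) if i = j, and sqrt 2 * (w_i o w_j) if i < j. *)
Definition fam (n N : nat) (B : 'M[algC]_(n, N)) (i j : 'I_n) : 'rV[algC]_N :=
  if i == j then schur (rowv B i) (rowv B i)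
  else sqrtC 2 *: schur (rowv B i) (rowv B j).

Definition equal_norm_orthogonal (n N : nat) (B : 'M[algC]_(n, N)) : Prop :=
  (forall i1 j1 i2 j2 : 'I_n, (i1 <= j1)%N -> (i2 <= j2)%N ->
     ip (fam B i1 j1) (fam B i1 j1) = ip (fam B i2 j2) (fam B i2 j2)) /\
  (forall i1 j1 i2 j2 : 'I_n, (i1 <= j1)%N -> (i2 <= j2)%N ->
     (i1, j1) != (i2, j2) -> ip (fam B i1 j1) (fam B i2 j2) = 0).

From HB Require Import structures.
From mathcomp Require Import all_boot all_order all_algebra all_field.
From mathcomp Require Import ring.
Import Order.TTheory GRing.Theory Num.Theory.
Set Implicit Arguments. Unset Strict Implicit. Unset Printing Implicit Defensive.
Local Open Scope ring_scope.

(* Let f_p, p = (s,t) with s <= t, be the family vectors w_s^(2) and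
   sqrt 2 (w_s o w_t), and let F be the m x N matrix with rows f_p, where
   m = C(n+1,2).  Expanding the square of <x_i|x_j> (the symmetric-square
   "Veronese" lift) gives <x_i|x_j>^2 = (F^* F)_ij, while H_pq = <f_p|f_q> is
   the Gram matrix F F^*.  Both products have the same trace and the same
   Frobenius norm, so the equation of the theorem reads
   m * sum_pq |H_pq|^2 = (tr H)^2.  For a Hermitian m x m matrix H,
     2 (m sum_pq |H_pq|^2 - (tr H)^2)
       = sum_pq |H_pp - H_qq|^2 + 2 m sum_(p <> q) |H_pq|^2,
   so equality holds iff H is scalar, i.e. the f_p have equal norms and are
   pairwise orthogonal. *)

Lemma psumr2_eq0P (R : numDomainType) (I J : finType) (P : pred I) (Q : I -> pred J)
    (F : I -> J -> R) :
  (forall i j, P i -> Q i j -> 0 <= F i j) ->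
  \sum_(i | P i) \sum_(j | Q i j) F i j = 0 <-> (forall i j, P i -> Q i j -> F i j = 0).
Proof.
move=> F_ge0; split=> [sum0 i j Pi Qij | F0]; last first.
  by rewrite big1 // => i Pi; rewrite big1 // => j; apply: F0.
have inner_ge0 k : P k -> 0 <= \sum_(l | Q k l) F k l.
  by move=> Pk; apply: sumr_ge0 => l; apply: F_ge0.
exact: psumr_eq0P (fun l => F_ge0 i l Pi) (psumr_eq0P inner_ge0 sum0 Pi) _ Qij.
Qed.

Lemma lagrange_identity (R : comPzRingType) (I : finType) (P : pred I) (d : I -> R) :
  (#|P|%:R * \sum_(p | P p) d p ^+ 2 - (\sum_(p | P p) d p) ^+ 2) *+ 2
  = \sum_(p | P p) \sum_(q | P q) (d p - d q) ^+ 2.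
Proof.
set m := #|P|; set A := \sum_(p | P p) d p ^+ 2; set D := \sum_(p | P p) d p.
have inner p : \sum_(q | P q) (d p - d q) ^+ 2 = d p ^+ 2 *+ m + A - (d p * D) *+ 2.
  under eq_bigr => q _ do rewrite sqrrB addrAC.
  by rewrite sumrB big_split /= sumr_const sumrMnl mulr_sumr.
rewrite (eq_bigr _ (fun p _ => inner p)) sumrB big_split /= sumrMnl sumr_const.
rewrite sumrMnl -mulr_suml -/A -/D.
ring.
Qed.

(* Complex conjugation on algC, stated so that rewriting keeps terms in the
   plain conjugation form. *)
Lemma conjCM (x y : algC) : (x * y)^* = x^* * y^*.
Proof. exact: rmorphM. Qed.

Lemma conjC_sum (I : finType) (P : pred I) (F : I -> algC) :
  (\sum_(i | P i) F i)^* = \sum_(i | P i) (F i)^*.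
Proof. exact: rmorph_sum. Qed.

Lemma ip_conj (m : nat) (x y : 'rV[algC]_m) : ip y x = (ip x y)^*.
Proof.
by rewrite /ip conjC_sum; apply: eq_bigr => t _; rewrite conjCM conjCK mulrC.
Qed.

Lemma sqr_norm_sum (I : finType) (P : pred I) (F : I -> algC) :
  `|\sum_(a | P a) F a| ^+ 2 = \sum_(a | P a) \sum_(b | P b) F a * (F b)^*.
Proof.
rewrite normCK conjC_sum mulr_suml; apply: eq_bigr => a _.
by rewrite mulr_sumr.
Qed.

Section HermitianForm.
Variables (T : finType) (P : pred T) (H : T -> T -> algC).
Hypothesis H_herm : forall p q, H q p = (H p q)^*.

Lemma herm_diag_real p : H p p \is Num.real.
Proof. by rewrite CrealE -H_herm. Qed.

Definition diag_spread : algC :=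
  \sum_(p | P p) \sum_(q | P q) `|H p p - H q q| ^+ 2.

Definition offdiag_mass : algC :=
  \sum_(p | P p) \sum_(q | P q && (q != p)) `|H p q| ^+ 2.

Lemma sum_sqr_norm_split :
  \sum_(p | P p) \sum_(q | P q) `|H p q| ^+ 2 = \sum_(p | P p) H p p ^+ 2 + offdiag_mass.
Proof.
rewrite /offdiag_mass -big_split; apply: eq_bigr => p Pp.
by rewrite (bigD1 p) //= real_normK ?herm_diag_real.
Qed.

Lemma gram_defect :
  (#|P|%:R * \sum_(p | P p) \sum_(q | P q) `|H p q| ^+ 2 - (\sum_(p | P p) H p p) ^+ 2) *+ 2
  = diag_spread + (#|P|%:R * offdiag_mass) *+ 2.
Proof.
rewrite sum_sqr_norm_split mulrDr addrAC mulrnDl lagrange_identity; congr (_ + _).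
apply: eq_bigr => p _; apply: eq_bigr => q _.
by rewrite real_normK // rpredB ?herm_diag_real.
Qed.

Lemma diag_spread0 :
  diag_spread = 0 <-> (forall p q, P p -> P q -> H p p = H q q).
Proof.
have sqr_ge0 p q : P p -> P q -> 0 <= `|H p p - H q q| ^+ 2.
  by move=> _ _; apply: exprn_ge0.
apply: (iff_trans (psumr2_eq0P sqr_ge0)).
split=> diag_eq p q Pp Pq; last by rewrite (diag_eq p q) // subrr normr0 expr0n.
by apply/eqP; rewrite -subr_eq0 -normr_eq0 -sqrf_eq0 (diag_eq p q).
Qed.

Lemma offdiag_mass0 :
  #|P|%:R * offdiag_mass = 0 <-> (forall p q, P p -> P q -> p != q -> H p q = 0).
Proof.
have sqr_ge0 p q : P p -> P q && (q != p) -> 0 <= `|H p q| ^+ 2.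
  by move=> _ _; apply: exprn_ge0.
split=> [m_mass0 p q Pp Pq npq | offdiag0].
  have m_gt0 : (0 < #|P|)%N by apply/card_gt0P; exists p.
  have mass0 : offdiag_mass = 0.
    by move/eqP: m_mass0; rewrite mulf_eq0 pnatr_eq0 eqn0Ngt m_gt0 => /eqP.
  have := proj1 (psumr2_eq0P sqr_ge0) mass0 p q Pp; rewrite Pq eq_sym npq.
  by move=> /(_ isT)/eqP; rewrite sqrf_eq0 normr_eq0 => /eqP.
rewrite [offdiag_mass](proj2 (psumr2_eq0P sqr_ge0)) ?mulr0 // => p q Pp /andP[Pq nqp].
by rewrite offdiag0 1?eq_sym // normr0 expr0n.
Qed.

Lemma gram_equality :
  #|P|%:R * (\sum_(p | P p) \sum_(q | P q) `|H p q| ^+ 2) = (\sum_(p | P p) H p p) ^+ 2 <->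
  (forall p q, P p -> P q -> H p p = H q q) /\
  (forall p q, P p -> P q -> p != q -> H p q = 0).
Proof.
have spread_ge0 : 0 <= diag_spread.
  by do 2!(apply: sumr_ge0 => ? _); apply: exprn_ge0.
have mass_ge0 : 0 <= #|P|%:R * offdiag_mass.
  by rewrite mulr_ge0 ?ler0n //; do 2!(apply: sumr_ge0 => ? _); apply: exprn_ge0.
split=> [equality | [diag_eq offdiag0]].
  have /eqP : diag_spread + (#|P|%:R * offdiag_mass) *+ 2 = 0.
    by rewrite -gram_defect equality subrr mul0rn.
  rewrite paddr_eq0 ?mulrn_wge0 // mulrn_eq0 /= => /andP[/eqP spread0 /eqP mass0].
  by split; [apply/diag_spread0 | apply/offdiag_mass0].
have : (#|P|%:R * \sum_(p | P p) \sum_(q | P q) `|H p q| ^+ 2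
         - (\sum_(p | P p) H p p) ^+ 2) *+ 2 = 0.
  by rewrite gram_defect (proj2 diag_spread0 diag_eq) (proj2 offdiag_mass0 offdiag0)
             mul0rn addr0.
by move/eqP; rewrite mulrn_eq0 /= subr_eq0 => /eqP.
Qed.

End HermitianForm.

(* For a family (f_p)_(p in P) of vectors of C^N, i.e. the rows of a matrix F,
   the Gram matrix F^* F of its columns has the same trace and the same
   Frobenius norm as the Gram matrix F F^* = (<f_p|f_q>) of its rows. *)
Section DualGram.
Variables (I : finType) (P : pred I) (N : nat) (f : I -> 'rV[algC]_N).

Definition dual_gram (i j : 'I_N) : algC := \sum_(p | P p) (f p 0 i)^* * f p 0 j.

Lemma dual_gram_trace :
  \sum_(i < N) dual_gram i i = \sum_(p | P p) ip (f p) (f p).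
Proof. exact: exchange_big. Qed.

Lemma dual_gram_frobenius :
  \sum_(i < N) \sum_(j < N) `|dual_gram i j| ^+ 2
  = \sum_(p | P p) \sum_(q | P q) `|ip (f p) (f q)| ^+ 2.
Proof.
under eq_bigr => i _ do under eq_bigr => j _ do rewrite sqr_norm_sum.
under [RHS]eq_bigr => p _ do under eq_bigr => q _ do rewrite sqr_norm_sum.
under eq_bigr => i _ do rewrite exchange_big.
rewrite exchange_big; apply: eq_bigr => p _.
under eq_bigr => i _ do rewrite exchange_big.
rewrite exchange_big; apply: eq_bigr => q _.
apply: eq_bigr => i _; apply: eq_bigr => j _.
by rewrite !conjCM !conjCK mulrACA.
Qed.

End DualGram.

Definition upper (n : nat) : pred ('I_n * 'I_n) := fun p => (p.1 <= p.2)%N.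
Arguments upper : clear implicits.

Lemma card_upper (n : nat) : #|upper n| = 'C(n.+1, 2).
Proof.
have below (t : 'I_n) : (\sum_(s < n | (s <= t)%N) 1)%N = t.+1.
  case: n t => [[]//|n t]; have t_le_n : (t <= n)%N by rewrite -ltnS.
  rewrite (big_ord_narrow_leq t_le_n).
  by rewrite big_const_ord iter_addn_0 mul1n.
rewrite -sum1_card (eq_bigl (fun p : 'I_n * 'I_n => predT p.1 && (p.1 <= p.2)%N)) //.
rewrite -(pair_big_dep predT (fun s t : 'I_n => (s <= t)%N) (fun _ _ => 1%N)).
rewrite (exchange_big_dep predT) //= (eq_bigr _ (fun t _ => below t)).
by rewrite -bin2_sum big_mkord big_ord_recl.
Qed.

Lemma sum_fold_upper (R : nmodType) (n : nat) (F : 'I_n * 'I_n -> R) :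
  \sum_p F p = \sum_(p | upper n p) (F p + (if (p.1 < p.2)%N then F (p.2, p.1) else 0)).
Proof.
rewrite (bigID (upper n)) /= big_split /=; congr (_ + _).
rewrite (reindex_inj (can_inj (@swap_pairK _ _))) /= -big_mkcondr.
apply: eq_bigl => p; rewrite /upper /swap_pair /= -ltnNge.
by case: (ltnP p.1 p.2) => [/ltnW ->|]; rewrite ?andbF.
Qed.

Definition lift (n N : nat) (B : 'M[algC]_(n, N)) (p : 'I_n * 'I_n) : 'rV[algC]_N :=
  fam B p.1 p.2.

Lemma ip_sqr_lift (n N : nat) (B : 'M[algC]_(n, N)) (i j : 'I_N) :
  ip (colv B i) (colv B j) ^+ 2 = dual_gram (upper n) (lift B) i j.
Proof.
have conj_sqrt2 : (sqrtC 2)^* = sqrtC (2 : algC) by rewrite geC0_conj // sqrtC_ge0 ler0n.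
rewrite /ip expr2 mulr_suml.
under eq_bigr => s _ do rewrite mulr_sumr.
rewrite pair_big /= sum_fold_upper; apply: eq_bigr => -[s t]; rewrite /upper /= => le_st.
rewrite /lift /fam /colv /rowv !mxE /=.
case: eqP => [<-|/eqP ne_st]; first by rewrite ltnn addr0 !mxE conjCM mulrACA.
have -> : (s < t)%N by rewrite ltn_neqAle ne_st le_st.
rewrite !mxE !conjCM conj_sqrt2 [RHS]mulrACA -expr2 sqrtCK.
ring.
Qed.

Unset Implicit Arguments.

Theorem corollary5 (n N : nat) (B : 'M[algC]_(n, N)) :
  ('C(n.+1, 2))%:R * (\sum_(i < N) \sum_(j < N) `|ip (colv B i) (colv B j)| ^+ 4)
    = (\sum_(i < N) ip (colv B i) (colv B i) ^+ 2) ^+ 2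
  <-> equal_norm_orthogonal B.
Proof.
have -> : \sum_(i < N) \sum_(j < N) `|ip (colv B i) (colv B j)| ^+ 4
          = \sum_(i < N) \sum_(j < N) `|dual_gram (upper n) (lift B) i j| ^+ 2.
  by apply: eq_bigr => i _; apply: eq_bigr => j _; rewrite -ip_sqr_lift normrX -exprM.
have -> : \sum_(i < N) ip (colv B i) (colv B i) ^+ 2
          = \sum_(i < N) dual_gram (upper n) (lift B) i i.
  by apply: eq_bigr => i _; apply: ip_sqr_lift.
rewrite dual_gram_frobenius dual_gram_trace -card_upper.
apply: (iff_trans (@gram_equality _ (upper n) (fun p q => ip (lift B p) (lift B q))
  (fun p q => ip_conj _ _))).
split=> [[eq_norm orth] | [eq_norm orth]].
  split=> i1 j1 i2 j2 le1 le2; first exact: (eq_norm (i1, j1) (i2, j2)).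
  exact: (orth (i1, j1) (i2, j2)).
by split=> -[i1 j1] -[i2 j2]; [apply: eq_norm | apply: orth].
Qed.
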